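(* Let $I=\langle N,M,V\rangle$ be an ordered instance of goods with $n$ agents and $m = n + c$ goods, where $n > c > 0$. Then $v_{ij} \ge \mu_i$ for every agent $i\in N$ and every good $j \in \{1, 2, \dots, n - c\}$.
   Context: An instance $I=\langle N,M,V\rangle$ has agents $N=\{1,\dots,n\}$, goods $M=\{1,\dots,m\}$ and additive valuations $v_i$ with $v_i(\emptyset)=0$, $v_i(S)=\sum_{g\in S}v_i(\{g\})$, $v_{ij}:=v_i(\{j\})\ge 0$. It is ordered if $v_{ij}\ge v_{i(j+1)}$ for all $i\in N$ and $1\le j<m$. An allocation ($n$-partition) is an ordered $n$-tuple of pairwise disjoint, possibly empty subsets of $M$ with union $M$. The maximin share of $i$ is $\mu_i=\max_A\min_j v_i(A_j)$ over all allocations $A$. *)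

From HB Require Import structures.
From mathcomp Require Import all_boot all_order all_algebra.
Set Implicit Arguments. Unset Strict Implicit. Unset Printing Implicit Defensive.
Import Order.TTheory GRing.Theory Num.Theory.
Local Open Scope ring_scope.

Section Fair.
Variable R : realFieldType.

(* Agents are 'I_n (agent i+1 in the paper is index i), goods are 'I_m
   (good j+1 in the paper is index j).  A valuation profile gives v i j = v_{ij}. *)

Definition bval (n m : nat) (v : 'I_n -> 'I_m -> R) (i : 'I_n) (S : {set 'I_m}) : R :=
  \sum_(g in S) v i g.

Definition nonneg_vals (n m : nat) (v : 'I_n -> 'I_m -> R) : Prop :=
  forall i j, 0 <= v i j.

Definition ordered_inst (n m : nat) (v : 'I_n -> 'I_m -> R) : Prop :=
  forall (i : 'I_n) (j k : 'I_m), nat_of_ord k = (nat_of_ord j).+1 -> v i k <= v i j.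

Definition is_allocation (n m : nat) (A : {ffun 'I_n -> {set 'I_m}}) : bool :=
  [forall k, forall l, (k != l) ==> [disjoint A k & A l]]
  && (\bigcup_(k < n) A k == [set: 'I_m]).

(* minimum / maximum of a finite nonempty list of reals (0 on the empty list,
   never used in the statement since n > 0 and allocations exist) *)
Definition seqmin (s : seq R) : R :=
  if s is x :: s' then foldr Num.min x s' else 0.
Definition seqmax (s : seq R) : R :=
  if s is x :: s' then foldr Num.max x s' else 0.

Definition mms (n m : nat) (v : 'I_n -> 'I_m -> R) (i : 'I_n) : R :=
  seqmax [seq seqmin [seq bval v i (A k) | k <- enum 'I_n]
         | A : {ffun 'I_n -> {set 'I_m}} <- enum {ffun 'I_n -> {set 'I_m}} & is_allocation A].

End Fair.

(* If every bundle of an allocation were worth more than v_ij to agent i,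
   each bundle would contain two goods or one of the j goods before good j:
   the empty bundle is worth 0, and a single good placed at or after j is
   worth at most v_ij.  Counting all goods once and the first j goods once
   more gives 2n <= (n + c) + j, contradicting j < n - c.  Hence some bundle
   of every allocation is worth at most v_ij, and so is the maximin share. *)

From HB Require Import structures.
From mathcomp Require Import all_boot all_order all_algebra.
From mathcomp Require Import zify.
Import Order.TTheory GRing.Theory Num.Theory.
Local Open Scope ring_scope.

Set Implicit Arguments.
Unset Strict Implicit.
Unset Printing Implicit Defensive.

Lemma seqmin_le_mem (R : realFieldType) (s : seq R) y : y \in s -> seqmin s <= y.
Proof.
case: s => [|x s] //=; elim: s => [|z s IH]; first by rewrite mem_seq1 => /eqP ->.
rewrite /= ge_min !in_cons => /or3P[y_x | /eqP -> | y_s].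
- by rewrite IH ?orbT // in_cons y_x.
- by rewrite lexx.
- by rewrite IH ?orbT // in_cons y_s orbT.
Qed.

Lemma seqmax_le (R : realFieldType) (s : seq R) b :
  0 <= b -> {in s, forall y, y <= b} -> seqmax s <= b.
Proof.
case: s => [|x s] //= _; elim: s => [|z s IH] s_le; first exact/s_le/mem_head.
rewrite /= ge_max s_le ?in_cons ?eqxx ?orbT //=.
apply: IH => y; rewrite in_cons => /orP[/eqP -> | y_s]; apply: s_le.
  by rewrite mem_head.
by rewrite !in_cons y_s !orbT.
Qed.

Lemma ordered_inst_antitone (R : realFieldType) n m (v : 'I_n -> 'I_m -> R) :
  ordered_inst v -> forall i (a b : 'I_m), (a <= b)%N -> v i b <= v i a.
Proof.
move=> v_ord i a b ab.
suff v_le d (b' : 'I_m) : b' = (a + d)%N :> nat -> v i b' <= v i a by apply: (v_le (b - a)%N); lia.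
elim: d b' => [|d IH] b' b'E; first by rewrite (_ : b' = a) //; apply: val_inj => /=; lia.
have ad_lt_m : (a + d < m)%N by have := ltn_ord b'; lia.
by apply: le_trans (IH (Ordinal ad_lt_m) erefl); apply: v_ord => /=; lia.
Qed.

Lemma card_ord_prefix m k : (#|[set g : 'I_m | (g < k)%N]| <= k)%N.
Proof.
rewrite cardE -(size_map val) -[X in (_ <= X)%N](size_iota 0).
apply: uniq_leq_size; first by rewrite (map_inj_uniq val_inj) enum_uniq.
by move=> x /mapP[g]; rewrite mem_enum inE => gk ->; rewrite mem_iota.
Qed.

Lemma sum_card_disjointI_le (I T : finType) (F : I -> {set T}) (D : {set T}) :
  (forall k l, k != l -> [disjoint F k & F l]) ->
  (\sum_k #|F k :&: D| <= #|D|)%N.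
Proof.
move=> disjF; have disjFD k l : k != l -> [disjoint F k :&: D & F l :&: D].
  by move=> kl; apply: disjointW (disjF k l kl); apply: subsetIl.
have := partition_disjoint_bigcup addn (fun=> 1%N) disjFD.
rewrite sum1_card (eq_bigr (fun k => #|F k :&: D|)) => [<-|k _]; last exact: sum1_card.
by apply/subset_leq_card/bigcupsP => k _; apply: subsetIr.
Qed.

Lemma allocation_disjoint n m (A : {ffun 'I_n -> {set 'I_m}}) :
  is_allocation A -> forall k l, k != l -> [disjoint A k & A l].
Proof. by case/andP=> /forallP disjA _ k l; move/forallP/(_ l)/implyP: (disjA k). Qed.

Section BundleBelow.

Variables (R : realFieldType) (n m : nat) (v : 'I_n -> 'I_m -> R) (i : 'I_n) (j : 'I_m).
Hypotheses (v_ge0 : nonneg_vals v) (v_ord : ordered_inst v).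

Let prefix := [set g : 'I_m | (g < j)%N].

Lemma bundle_gt_card (S : {set 'I_m}) :
  v i j < bval v i S -> (2 <= #|S| + #|S :&: prefix|)%N.
Proof.
case S_card: #|S| => [|[|p]] // vS.
  by move/cards0_eq: S_card vS => ->; rewrite /bval big_set0 ltNge v_ge0.
have /cards1P[g S_g] : #|S| == 1%N by rewrite S_card.
rewrite /bval S_g big_set1 in vS.
have g_lt_j : (g < j)%N.
  by rewrite ltnNge; apply: contraTN vS => /(ordered_inst_antitone v_ord i); rewrite -leNgt.
by rewrite add1n ltnS card_gt0; apply/set0Pn; exists g; rewrite S_g !inE eqxx.
Qed.

Lemma disjoint_bundle_le (A : 'I_n -> {set 'I_m}) :
  (forall k l, k != l -> [disjoint A k & A l]) -> (m + j < n.*2)%N ->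
  exists k, bval v i (A k) <= v i j.
Proof.
move=> disjA too_few; have [k Ak | all_gt] := pickP (fun k => bval v i (A k) <= v i j).
  by exists k.
suff : (n.*2 <= m + j)%N by rewrite leqNgt too_few.
have bundles_big : (\sum_(k < n) 2 <= \sum_k (#|A k :&: setT| + #|A k :&: prefix|))%N.
  by apply: leq_sum => k _; rewrite setIT bundle_gt_card // ltNge all_gt.
rewrite sum_nat_const card_ord muln2 big_split /= in bundles_big.
apply: leq_trans bundles_big (leq_add _ _).
  by rewrite (leq_trans (sum_card_disjointI_le _ disjA)) // cardsT card_ord.
exact: leq_trans (sum_card_disjointI_le _ disjA) (card_ord_prefix _ _).
Qed.

End BundleBelow.

Theorem lemma9 (R : realFieldType) (n c : nat) (v : 'I_n -> 'I_(n + c) -> R) :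
  (0 < c)%N -> (c < n)%N ->
  nonneg_vals v -> ordered_inst v ->
  forall (i : 'I_n) (j : 'I_(n + c)), (nat_of_ord j < n - c)%N ->
    mms v i <= v i j.
Proof.
move=> _ _ v_ge0 v_ord i j j_lt.
rewrite /mms; apply: seqmax_le => [|x /mapP[A]]; first exact: v_ge0.
rewrite mem_filter => /andP[/allocation_disjoint disjA _] ->.
have [|k Ak] := disjoint_bundle_le i (j := j) v_ge0 v_ord disjA; first lia.
by apply: le_trans Ak; apply/seqmin_le_mem/map_f/mem_enum.
Qed.
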